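(* Let $G$ be a graph and $k\in\mathbb N$. For every finite star $\sigma\subseteq\vec S_k(G)$ with finite interior, the set $S_k^\sigma(G)$ is finite.
   Context: Graphs may be infinite. A separation of $G$ is a set $\{A,B\}$ with $A,B\subseteq V(G)$, $A\cup B=V(G)$ and no edge of $G$ between $A\setminus B$ and $B\setminus A$; its order is $|A\cap B|$. $S_k(G)$ is the set of separations of order $<k$ and $\vec S_k(G)$ the set of their orientations $(A,B)$, $(B,A)$. Oriented separations are ordered by $(A,B)\le(C,D)$ iff $A\subseteq C$ and $B\supseteq D$. A star is a set $\sigma$ of oriented finite-order separations, not containing $(V(G),V(G))$, with $(A,B)\le(D,C)$ for any two distinct $(A,B),(C,D)\in\sigma$; its interior is $\bigcap_{(A,B)\in\sigma}B$. $S_k^\sigma(G)$ is the set of $r\in S_k(G)$ such that for every $\vec s\in\sigma$ some orientation of $r$ is $\ge\vec s$. *)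

(* Graphs may be infinite: a graph is a vertex type V with a
   symmetric, irreflexive adjacency relation. Vertex sets are predicates V -> Prop. *)
From Stdlib Require Import List.

Definition vset (V : Type) := V -> Prop.

Definition osep (V : Type) := (vset V * vset V)%type.

Definition is_separation {V : Type} (adj : V -> V -> Prop) (A B : vset V) : Prop :=
  (forall v, A v \/ B v) /\
  (forall u v, A u -> ~ B u -> B v -> ~ A v -> ~ adj u v).

(* |A ∩ B| < k : A ∩ B is covered by some list of length < k
   (i.e. A ∩ B is finite with fewer than k elements). *)
Definition order_lt {V : Type} (A B : vset V) (k : nat) : Prop :=
  exists s : list V, length s < k /\ forall v, A v -> B v -> In v s.

Definition vset_finite {V : Type} (X : vset V) : Prop :=
  exists s : list V, forall v, X v -> In v s.

Definition finite_order {V : Type} (A B : vset V) : Prop :=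
  vset_finite (fun v => A v /\ B v).

Definition in_vSk {V : Type} (adj : V -> V -> Prop) (k : nat) (p : osep V) : Prop :=
  is_separation adj (fst p) (snd p) /\ order_lt (fst p) (snd p) k.

Definition osep_le {V : Type} (p q : osep V) : Prop :=
  (forall v, fst p v -> fst q v) /\ (forall v, snd q v -> snd p v).

Definition full_osep (V : Type) : osep V := (fun _ => True, fun _ => True).

Definition is_star {V : Type} (adj : V -> V -> Prop) (sigma : list (osep V)) : Prop :=
  (forall p, In p sigma -> is_separation adj (fst p) (snd p) /\ finite_order (fst p) (snd p)) /\
  ~ In (full_osep V) sigma /\
  (forall p q, In p sigma -> In q sigma -> p <> q -> osep_le p (snd q, fst q)).

Definition interior {V : Type} (sigma : list (osep V)) : vset V :=
  fun v => forall p, In p sigma -> snd p v.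

(* {A,B} ∈ S_k^sigma(G), with the unordered separation represented by (A,B). *)
Definition in_Sk_sigma {V : Type} (adj : V -> V -> Prop) (k : nat)
    (sigma : list (osep V)) (A B : vset V) : Prop :=
  in_vSk adj k (A, B) /\
  forall s, In s sigma -> osep_le s (A, B) \/ osep_le s (B, A).

(* S_k^sigma(G) is finite: finitely many unordered separations {A,B}, i.e. a
   finite list L of oriented separations containing an orientation of each. *)
Definition Sk_sigma_finite {V : Type} (adj : V -> V -> Prop) (k : nat)
    (sigma : list (osep V)) : Prop :=
  exists L : list (osep V), forall A B, in_Sk_sigma adj k sigma A B ->
    In (A, B) L \/ In (B, A) L.

From Stdlib Require Import List Classical FunctionalExtensionality PropExtensionality.

(* Let I be the interior of sigma and {A,B} in S_k^sigma(G). A vertex v outside I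
   lies outside the big side of some s in sigma; as s is below (A,B) or (B,A),
   v lies in A exactly when v is missed by the big side of some s <= (A,B).
   So A is determined by its trace on the finite set I together with the set of
   s in sigma below (A,B), and likewise for B: there are only finitely many
   possibilities. *)

Fixpoint sublists {X : Type} (l : list X) : list (list X) :=
  match l with
  | nil => nil :: nil
  | x :: l' => map (cons x) (sublists l') ++ sublists l'
  end.

Lemma sublists_filter {X : Type} (P : X -> Prop) (l : list X) :
  exists T, In T (sublists l) /\ forall x, In x T <-> In x l /\ P x.
Proof.
  induction l as [|x l [T [HT HTspec]]]; simpl.
  - exists nil; split; [left; reflexivity | intro x; simpl; tauto].
  - destruct (classic (P x)) as [Px|nPx].
    + exists (x :: T); split.
      * apply in_or_app; left; apply in_map; exact HT.
      * intro y; simpl; rewrite HTspec.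
        split; [intros [<-|[]]|intros [[<-|] ]]; auto.
    + exists T; split.
      * apply in_or_app; right; exact HT.
      * intro y; rewrite HTspec.
        split; [intros []|intros [[<-|] ]]; tauto.
Qed.

Definition sep_side {V : Type} (I : vset V) (S : list V) (T : list (osep V)) : vset V :=
  fun v => (I v /\ In v S) \/ (~ I v /\ exists s, In s T /\ ~ snd s v).

Section SidesOfSeparations.

Context {V : Type} (sigma : list (osep V)).

Lemma side_outside_interior (A B : vset V) (v : V) :
  (forall v, A v \/ B v) ->
  (forall s, In s sigma -> osep_le s (A, B) \/ osep_le s (B, A)) ->
  ~ interior sigma v ->
  A v <-> exists s, In s sigma /\ osep_le s (A, B) /\ ~ snd s v.
Proof.
  intros Hcov Hor Hv; split.
  - intro Av.
    apply not_all_ex_not in Hv as [s Hs].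
    apply imply_to_and in Hs as [Hs Hsv].
    exists s; split; [exact Hs | split; [|exact Hsv]].
    destruct (Hor s Hs) as [Hle|[_ HAs]]; [exact Hle|].
    contradiction (Hsv (HAs v Av)).
  - intros (s & _ & [_ HBs] & Hsv).
    destruct (Hcov v) as [Av|Bv]; [exact Av | contradiction (Hsv (HBs v Bv))].
Qed.

Definition sides (l : list V) : list (vset V) :=
  map (fun '(X, T) => sep_side (interior sigma) X T)
      (list_prod (sublists l) (sublists sigma)).

Lemma side_in_sides (l : list V) (A B : vset V) :
  (forall v, interior sigma v -> In v l) ->
  (forall v, A v \/ B v) ->
  (forall s, In s sigma -> osep_le s (A, B) \/ osep_le s (B, A)) ->
  In A (sides l).
Proof.
  intros Hl Hcov Hor.
  destruct (sublists_filter A l) as [S [HS HSspec]].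
  destruct (sublists_filter (fun s => osep_le s (A, B)) sigma) as [T [HT HTspec]].
  apply in_map_iff; exists (S, T); split; [|apply in_prod; assumption].
  extensionality v; apply propositional_extensionality; unfold sep_side.
  rewrite HSspec.
  destruct (classic (interior sigma v)) as [Iv|nIv].
  - specialize (Hl v Iv); tauto.
  - rewrite (side_outside_interior A B v Hcov Hor nIv).
    setoid_rewrite HTspec; firstorder.
Qed.

End SidesOfSeparations.

Theorem proposition4p5 (V : Type) (adj : V -> V -> Prop)
  (adj_sym : forall u v, adj u v -> adj v u)
  (adj_irrefl : forall v, ~ adj v v)
  (k : nat) (sigma : list (osep V)) :
  is_star adj sigma ->
  (forall p, In p sigma -> in_vSk adj k p) ->
  vset_finite (interior sigma) ->
  Sk_sigma_finite adj k sigma.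
Proof.
  intros _ _ [l Hl].
  exists (list_prod (sides sigma l) (sides sigma l)).
  intros A B [[[Hcov _] _] Hor].
  left; apply in_prod.
  - exact (side_in_sides sigma l A B Hl Hcov Hor).
  - apply (side_in_sides sigma l B A Hl).
    + intro v; destruct (Hcov v); tauto.
    + intros s Hs; destruct (Hor s Hs); tauto.
Qed.
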